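(* Let $\ell\in\mathbb{N}$ and let $\rho$ be a self-avoiding walk of length $\ell$ in $\mathbb{Z}^2$ such that $y(\rho_0)=\min_{0\le i\le\ell}y(\rho_i)$ and $y(\rho_\ell)=\max_{0\le i\le\ell}y(\rho_i)$. Let $h\in\mathbb{N}$. If $(j_1,k_1)\ne(j_2,k_2)$ are two right-detachable $\rho$-adjacencies of gap $h$, then $|k_2-k_1|\ge h$.
   Context: For a self-avoiding walk $\rho$ of length $\ell$ in $\mathbb{Z}^2$, an index pair $(j,k)$ with $0\le j<k\le\ell$ is a right-detachable $\rho$-adjacency of gap $k-j$ if: (i) $\{\rho_j,\rho_k\}$ are the endpoints of a vertical unit edge; (ii) letting $P$ be the unit square (plaquette) whose right side is this edge, the two horizontal edges of $P$ are traversed by $\rho$ and the two vertical edges of $P$ are not; (iii) the edge set obtained from the edges of $\rho$ by removing the two horizontal edges of $P$ and adding its two vertical edges is the disjoint union of a self-avoiding walk $\rho'$ and a self-avoiding polygon $Q$; (iv) for every positive integer $t$, the translate $Q+(t,0)$ is disjoint from $\rho'$. *)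

From Stdlib Require Import ZArith Arith Lia.
Open Scope Z_scope.

Definition point := (Z * Z)%type.
Definition xc (p : point) : Z := fst p.
Definition yc (p : point) : Z := snd p.

Definition adj (p q : point) : Prop :=
  Z.abs (xc p - xc q) + Z.abs (yc p - yc q) = 1.

Definition same_edge (a b p q : point) : Prop :=
  (a = p /\ b = q) \/ (a = q /\ b = p).

(* A walk of length l is a map w : nat -> point, of which only w 0 .. w l
   matter.  It is self-avoiding if consecutive points are adjacent and the
   points w 0, ..., w l are pairwise distinct. *)
Definition SAW (w : nat -> point) (l : nat) : Prop :=
  (forall i, (i < l)%nat -> adj (w i) (w (S i))) /\
  (forall i j, (i <= l)%nat -> (j <= l)%nat -> w i = w j -> i = j).

Definition walk_edge (w : nat -> point) (l : nat) (p q : point) : Prop :=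
  exists i, (i < l)%nat /\ same_edge (w i) (w (S i)) p q.

Definition walk_vertex (w : nat -> point) (l : nat) (v : point) : Prop :=
  exists i, (i <= l)%nat /\ w i = v.

Definition SAP (q : nat -> point) (m : nat) : Prop :=
  (3 <= m)%nat /\
  (forall i, (i < m)%nat -> adj (q i) (q ((S i) mod m)%nat)) /\
  (forall i j, (i < m)%nat -> (j < m)%nat -> q i = q j -> i = j).

Definition poly_edge (q : nat -> point) (m : nat) (a b : point) : Prop :=
  exists i, (i < m)%nat /\ same_edge (q i) (q ((S i) mod m)%nat) a b.

Definition poly_vertex (q : nat -> point) (m : nat) (v : point) : Prop :=
  exists i, (i < m)%nat /\ q i = v.

(* Plaquette P whose right side is the vertical edge {(x,y),(x,y+1)}:
   corners (x-1,y),(x,y),(x-1,y+1),(x,y+1). *)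
Definition plaq_horizontal (x y : Z) (a b : point) : Prop :=
  same_edge (x - 1, y) (x, y) a b \/ same_edge (x - 1, y + 1) (x, y + 1) a b.

Definition plaq_vertical (x y : Z) (a b : point) : Prop :=
  same_edge (x, y) (x, y + 1) a b \/ same_edge (x - 1, y) (x - 1, y + 1) a b.

Definition swapped_edge (rho : nat -> point) (l : nat) (x y : Z)
  (a b : point) : Prop :=
  (walk_edge rho l a b /\ ~ plaq_horizontal x y a b) \/ plaq_vertical x y a b.

(* (j,k) is a right-detachable rho-adjacency (its gap is k - j). *)
Definition right_detachable (rho : nat -> point) (l j k : nat) : Prop :=
  (j < k)%nat /\ (k <= l)%nat /\
  exists x y : Z,
    same_edge (rho j) (rho k) (x, y) (x, y + 1) /\
    walk_edge rho l (x - 1, y) (x, y) /\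
    walk_edge rho l (x - 1, y + 1) (x, y + 1) /\
    ~ walk_edge rho l (x, y) (x, y + 1) /\
    ~ walk_edge rho l (x - 1, y) (x - 1, y + 1) /\
    exists (rho' : nat -> point) (l' : nat) (q : nat -> point) (m : nat),
      SAW rho' l' /\ SAP q m /\
      (forall a b, swapped_edge rho l x y a b <->
                   (walk_edge rho' l' a b \/ poly_edge q m a b)) /\
      (forall v, ~ (walk_vertex rho' l' v /\ poly_vertex q m v)) /\
      (forall v, walk_vertex rho l v <->
                 (walk_vertex rho' l' v \/ poly_vertex q m v)) /\
      (forall t : Z, 0 < t -> forall v,
          poly_vertex q m v -> ~ walk_vertex rho' l' (xc v + t, yc v)).

From Stdlib Require Import ZArith Arith Lia Classical.

(* Swapping the horizontal sides of the plaquette for its vertical ones cuts rho at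
   the two steps p < q crossing the plaquette, and each of the three resulting
   stretches of rho lies wholly in rho' or wholly in Q.  Since rho' has an endpoint and
   Q cannot be translated to the right into rho', Q is exactly the middle stretch
   rho_j, ..., rho_k (j = p + 1, k = q): it is entered from the left at rho_j and left
   to the left after rho_k, and each of its vertices lies strictly to the right of every
   other vertex of rho in the same row.
   If two such loops with gap h had |k2 - k1| < h, they would overlap.  Then the
   stretches rho_(j1), ..., rho_(j2 - 1) and rho_(k1 + 1), ..., rho_k2 would each lie to
   the right of the other on every common row, so they occupy disjoint sets of rows;
   as both are connected, this forces y(rho_j1) = y(rho_j2) and y(rho_k1) = y(rho_k2),
   whence x(rho_j1) < x(rho_j2) = x(rho_k2) < x(rho_k1) = x(rho_j1). *)

Definition left_nbr (v : point) : point := (xc v - 1, yc v).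

Definition between (a b z : Z) : Prop := a <= z <= b \/ b <= z <= a.

Lemma point_eq (u v : point) : xc u = xc v -> yc u = yc v -> u = v.
Proof. destruct u, v; unfold xc, yc; simpl; intros -> ->; reflexivity. Qed.

Lemma adj_yc_step (u v : point) : adj u v -> Z.abs (yc v - yc u) <= 1.
Proof. unfold adj; lia. Qed.

Lemma same_edge_sym (a b u v : point) : same_edge a b u v -> same_edge u v a b.
Proof. unfold same_edge; intuition. Qed.

Lemma same_edge_flip (a b u v : point) : same_edge a b u v -> same_edge a b v u.
Proof. unfold same_edge; intuition. Qed.

Lemma SAW_inj (w : nat -> point) (l i j : nat) :
  SAW w l -> (i <= l)%nat -> (j <= l)%nat -> w i = w j -> i = j.
Proof. intros [_ Hinj]; apply Hinj. Qed.

Lemma SAW_edge_index_unique (w : nat -> point) (l i i' : nat) (a b : point) :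
  SAW w l -> (i < l)%nat -> (i' < l)%nat ->
  same_edge (w i) (w (S i)) a b -> same_edge (w i') (w (S i')) a b -> i = i'.
Proof.
  intros Hs Hi Hi' [[E1 E2]|[E1 E2]] [[E3 E4]|[E3 E4]];
  try (apply (SAW_inj w l); [assumption | lia | lia | congruence]).
  all: assert (i = S i') by (apply (SAW_inj w l); [assumption | lia | lia | congruence]);
       assert (S i = i') by (apply (SAW_inj w l); [assumption | lia | lia | congruence]);
       lia.
Qed.

Lemma walk_edge_vertices (w : nat -> point) (l : nat) (a b : point) :
  walk_edge w l a b -> walk_vertex w l a /\ walk_vertex w l b.
Proof.
  intros [i [Hi [[<- <-]|[<- <-]]]]; split;
  solve [exists i; split; [lia | auto] | exists (S i); split; [lia | auto]].
Qed.

Lemma poly_edge_vertices (Q : nat -> point) (m : nat) (a b : point) :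
  poly_edge Q m a b -> poly_vertex Q m a /\ poly_vertex Q m b.
Proof.
  intros [i [Hi Hab]].
  assert (Hmod : (S i mod m < m)%nat) by (apply Nat.mod_upper_bound; lia).
  destruct Hab as [[<- <-]|[<- <-]]; split;
  solve [exists i; split; [lia | auto] | exists (S i mod m)%nat; split; [lia | auto]].
Qed.

Lemma SAW_start_neighbour_unique (w : nat -> point) (l : nat) (u v : point) :
  SAW w l -> walk_edge w l (w 0%nat) u -> walk_edge w l (w 0%nat) v -> u = v.
Proof.
  intros Hs.
  assert (Hnbr : forall u, walk_edge w l (w 0%nat) u -> u = w 1%nat).
  { intros u' [i [Hi [[E1 E2]|[E1 E2]]]].
    - assert (i = 0%nat) by (apply (SAW_inj w l); [assumption | lia | lia | exact E1]).
      subst i; congruence.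
    - assert (S i = 0%nat) by (apply (SAW_inj w l); [assumption | lia | lia | exact E2]).
      lia. }
  intros Hu Hv; rewrite (Hnbr u Hu), (Hnbr v Hv); reflexivity.
Qed.

Lemma swapped_edge_sym (rho : nat -> point) (l : nat) (x y : Z) (a b : point) :
  swapped_edge rho l x y a b -> swapped_edge rho l x y b a.
Proof.
  intros [[[i [Hi Hab]] Hnh] | [Hv | Hv]].
  - left; split.
    + exists i; split; [exact Hi | now apply same_edge_flip].
    + intros [Hh | Hh]; apply Hnh; [left | right]; now apply same_edge_flip.
  - right; left; now apply same_edge_flip.
  - right; right; now apply same_edge_flip.
Qed.

Record right_detached_loop (rho : nat -> point) (l j k : nat) : Prop := {
  loop_bounds : (0 < j < k)%nat /\ (k < l)%nat;
  loop_enter : rho (j - 1)%nat = left_nbr (rho j);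
  loop_exit : rho (S k) = left_nbr (rho k);
  loop_xc : xc (rho j) = xc (rho k);
  loop_yc : Z.abs (yc (rho j) - yc (rho k)) = 1;
  loop_rightmost : forall a b, (j <= a <= k)%nat -> (b <= l)%nat -> ~ (j <= b <= k)%nat ->
    yc (rho b) = yc (rho a) -> xc (rho b) < xc (rho a)
}.

Section DetachedBlock.

Variables (rho : nat -> point) (l : nat).
(* [PV], [WV] and [Sg] stand for the vertices of Q, the vertices of rho' and the
   swapped edge set; the point [w] of [Hend] is an endpoint of rho'. *)
Variables (PV WV : point -> Prop) (Sg : point -> point -> Prop).

Hypothesis Hsaw : SAW rho l.
Hypothesis Hpart : forall v, walk_vertex rho l v <-> WV v \/ PV v.
Hypothesis Hdisj : forall v, ~ (WV v /\ PV v).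
Hypothesis HPV : exists v, PV v.
Hypothesis Hend : exists w, WV w /\ forall u v, Sg w u -> Sg w v -> u = v.
Hypothesis Sg_PV : forall a b, Sg a b -> (PV a <-> PV b).
Hypothesis Sg_sym : forall a b, Sg a b -> Sg b a.
Hypothesis Hright : forall v w, PV v -> WV w -> yc w = yc v -> xc w <= xc v.

Variables p q : nat.
Hypothesis Hpq : (p < q)%nat.
Hypothesis Hql : (q < l)%nat.
Hypothesis Hstep : forall i, (i < l)%nat -> i <> p -> i <> q -> Sg (rho i) (rho (S i)).

Lemma PV_const u v : (u <= v <= l)%nat -> (forall i, (u <= i < v)%nat -> i <> p /\ i <> q) ->
  (PV (rho u) <-> PV (rho v)).
Proof.
  intros Huv Hno. induction v as [|v IH].
  - replace u with 0%nat by lia; reflexivity.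
  - destruct (Nat.eq_dec u (S v)) as [-> | Hne]; [reflexivity |].
    destruct (Hno v ltac:(lia)) as [Hvp Hvq].
    rewrite (IH ltac:(lia) (fun i Hi => Hno i ltac:(lia))).
    apply Sg_PV, Hstep; lia.
Qed.

Lemma PV_by_block i : (i <= l)%nat ->
  (i <= p)%nat /\ (PV (rho i) <-> PV (rho p)) \/
  (p < i <= q)%nat /\ (PV (rho i) <-> PV (rho (S p))) \/
  (q < i)%nat /\ (PV (rho i) <-> PV (rho (S q))).
Proof.
  intros Hi. destruct (le_lt_dec i p); [| destruct (le_lt_dec i q)].
  - left; split; [lia |]. apply PV_const; intros; lia.
  - right; left; split; [lia |]. symmetry; apply PV_const; intros; lia.
  - right; right; split; [lia |]. symmetry; apply PV_const; intros; lia.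
Qed.

Lemma PV_blocks_not_uniform :
  (PV (rho p) <-> PV (rho (S p))) -> (PV (rho (S p)) <-> PV (rho (S q))) -> False.
Proof.
  intros E1 E2.
  assert (Huniform : forall i, (i <= l)%nat -> (PV (rho i) <-> PV (rho p)))
    by (intros i Hi; destruct (PV_by_block i Hi) as [[_ E] | [[_ E] | [_ E]]]; tauto).
  destruct Hend as [w [Hw _]], HPV as [v Hv].
  destruct (proj2 (Hpart w) (or_introl Hw)) as [i [Hi <-]].
  destruct (proj2 (Hpart v) (or_intror Hv)) as [i' [Hi' <-]].
  apply (Hdisj (rho i)); split; [exact Hw |].
  apply (Huniform i Hi), (Huniform i' Hi'), Hv.
Qed.

Lemma middle_block_two_neighbours :
  (S p < q)%nat -> Sg (rho (S p)) (rho q) ->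
  (forall i, (i < l)%nat -> ~ same_edge (rho i) (rho (S i)) (rho (S p)) (rho q)) ->
  forall i, (p < i <= q)%nat -> exists u v, u <> v /\ Sg (rho i) u /\ Sg (rho i) v.
Proof.
  intros Hlong Hclose Hunwalked i Hi.
  assert (Hback : forall n, (S p < n <= q)%nat -> Sg (rho n) (rho (n - 1)%nat)).
  { intros n Hn. apply Sg_sym.
    replace n with (S (n - 1)) at 2 by lia. apply Hstep; lia. }
  assert (Hshort : S (S p) <> q)
    by (intros E; apply (Hunwalked (S p)); [lia | left; rewrite E; split; reflexivity]).
  destruct (Nat.eq_dec i (S p)) as [-> | Hip]; [| destruct (Nat.eq_dec i q) as [-> | Hiq]].
  - exists (rho (S (S p))), (rho q); repeat split.
    + intros E; apply Hshort, (SAW_inj rho l); [assumption | lia | lia | exact E].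
    + apply Hstep; lia.
    + exact Hclose.
  - exists (rho (q - 1)%nat), (rho (S p)); repeat split.
    + intros E. apply Hshort.
      enough ((q - 1)%nat = S p) by lia.
      apply (SAW_inj rho l); [assumption | lia | lia | exact E].
    + apply Hback; lia.
    + apply Sg_sym, Hclose.
  - exists (rho (i - 1)%nat), (rho (S i)); repeat split.
    + intros E.
      enough ((i - 1)%nat = S i) by lia.
      apply (SAW_inj rho l); [assumption | lia | lia | exact E].
    + apply Hback; lia.
    + apply Hstep; lia.
Qed.

(* The step p crosses the plaquette between its corners La and Ra, the step q between
   Lb and Rb; the L-corners form its left side, the R-corners its right side. *)
Variables La Ra Lb Rb : point.
Hypothesis HLa : La = left_nbr Ra.
Hypothesis HLb : Lb = left_nbr Rb.
Hypothesis Hcol_L : Sg La Lb.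
Hypothesis Hcol_R : Sg Ra Rb.
Hypothesis HLab : La <> Lb.
Hypothesis HL_unwalked : forall i, (i < l)%nat -> ~ same_edge (rho i) (rho (S i)) La Lb.
Hypothesis Hp_edge : same_edge (rho p) (rho (S p)) La Ra.
Hypothesis Hq_edge : same_edge (rho q) (rho (S q)) Lb Rb.

Lemma PV_left_corner_right : PV La -> PV Ra.
Proof.
  intros HL.
  assert (HRv : walk_vertex rho l Ra).
  { destruct Hp_edge as [[_ E] | [E _]];
      [exists (S p) | exists p]; (split; [lia | exact E]). }
  destruct (proj1 (Hpart Ra) HRv) as [HW | HP]; [exfalso | exact HP].
  pose proof (Hright La Ra HL HW) as Hle.
  rewrite HLa in Hle; unfold left_nbr in Hle; simpl in Hle. lia.
Qed.

Lemma detached_block :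
  rho p = La /\ rho (S p) = Ra /\ rho q = Rb /\ rho (S q) = Lb /\
  (forall i, (i <= l)%nat -> (PV (rho i) <-> (p < i <= q)%nat)).
Proof.
  pose proof (Sg_PV _ _ Hcol_L) as EL; pose proof (Sg_PV _ _ Hcol_R) as ER.
  pose proof PV_left_corner_right as LR.
  pose proof PV_blocks_not_uniform as Hnu.
  assert (Hmid : PV (rho (S p)) <-> PV (rho q)) by (apply PV_const; intros; lia).
  destruct Hp_edge as [[E1 E2] | [E1 E2]], Hq_edge as [[E3 E4] | [E3 E4]];
    rewrite E1, E2, E4 in Hnu; rewrite E2, E3 in Hmid.
  - exfalso; apply Hnu; tauto.
  - assert (Hcols : ~ PV La /\ PV Ra) by (split; [| apply NNPP]; intros ?; apply Hnu; tauto).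
    do 4 (split; [assumption |]); intros i Hi;
      destruct (PV_by_block i Hi) as [[Hb E] | [[Hb E] | [Hb E]]];
      rewrite ?E1, ?E2, ?E4 in E; split; intros ?; (tauto || lia).
  - (* rho' would be the middle stretch closed up by the left side: a cycle. *)
    exfalso.
    assert (Hcols : ~ PV La /\ PV Ra) by (split; [| apply NNPP]; intros ?; apply Hnu; tauto).
    destruct Hend as [w [Hw Hw_end]].
    destruct (proj2 (Hpart w) (or_introl Hw)) as [i [Hi <-]].
    assert (Hmid_i : (p < i <= q)%nat).
    { destruct (PV_by_block i Hi) as [[Hb E] | [[Hb E] | [Hb E]]];
        rewrite ?E1, ?E4 in E; [| lia |];
        exfalso; apply (Hdisj (rho i)); tauto. }
    assert (Hlong : S p <> q) by (intros E; apply HLab; rewrite <- E2, <- E3, E; reflexivity).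
    rewrite <- E2, <- E3 in Hcol_L, HL_unwalked.
    destruct (middle_block_two_neighbours ltac:(lia) Hcol_L HL_unwalked i Hmid_i)
      as [u [v [Huv [Hu Hv]]]].
    exact (Huv (Hw_end u v Hu Hv)).
  - exfalso; apply Hnu; tauto.
Qed.

Lemma right_detached_loop_of_block (j k : nat) :
  (j < k <= l)%nat -> same_edge (rho j) (rho k) Ra Rb ->
  xc Ra = xc Rb -> Z.abs (yc Ra - yc Rb) = 1 -> right_detached_loop rho l j k.
Proof.
  intros Hjk Hjk_edge Hx Hy.
  destruct detached_block as (E1 & E2 & E3 & E4 & Hmem).
  assert (Hj : j = S p /\ k = q).
  { rewrite <- E2, <- E3 in Hjk_edge.
    destruct Hjk_edge as [[A B] | [A B]].
    - split; apply (SAW_inj rho l); (assumption || lia).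
    - enough (j = q /\ k = S p) by lia.
      split; apply (SAW_inj rho l); (assumption || lia). }
  destruct Hj as [-> ->].
  split; try (rewrite ?E2, ?E3, ?E4; (assumption || lia)).
  { replace (S p - 1)%nat with p by lia. rewrite E1, E2. exact HLa. }
  intros a b Ha Hb Hb_out Hyab.
  assert (HPa : PV (rho a)) by (apply Hmem; lia).
  assert (HWb : WV (rho b)).
  { assert (Hbv : walk_vertex rho l (rho b)) by (exists b; split; [exact Hb | reflexivity]).
    destruct (proj1 (Hpart _) Hbv) as [HW | HP]; [exact HW |].
    exfalso; apply Hb_out, Hmem; assumption. }
  pose proof (Hright _ _ HPa HWb Hyab) as Hle.
  destruct (Z.eq_dec (xc (rho b)) (xc (rho a))) as [Hxab | Hxab]; [exfalso | lia].
  apply Hb_out.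
  replace b with a by (apply (SAW_inj rho l); [assumption | lia | lia | apply point_eq; auto]).
  lia.
Qed.

End DetachedBlock.

Lemma disjoint_union_edge_poly_vertex (w Q : nat -> point) (l m : nat) (a b : point) :
  (forall v, ~ (walk_vertex w l v /\ poly_vertex Q m v)) ->
  walk_edge w l a b \/ poly_edge Q m a b -> (poly_vertex Q m a <-> poly_vertex Q m b).
Proof.
  intros Hdisj [Hab | Hab].
  - destruct (walk_edge_vertices w l a b Hab) as [Ha Hb].
    split; intros H; exfalso; [apply (Hdisj a) | apply (Hdisj b)]; split; assumption.
  - destruct (poly_edge_vertices Q m a b Hab); tauto.
Qed.

Lemma translates_miss_rightmost (A B : point -> Prop) :
  (forall t, 0 < t -> forall v, A v -> ~ B (xc v + t, yc v)) ->
  forall v w, A v -> B w -> yc w = yc v -> xc w <= xc v.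
Proof.
  intros Hmiss v w Hv Hw Hy. apply Z.nlt_ge; intros Hlt.
  apply (Hmiss (xc w - xc v) ltac:(lia) v Hv).
  replace (xc v + (xc w - xc v), yc v) with w; [exact Hw |].
  apply point_eq; simpl; lia.
Qed.

Lemma disjoint_union_start_neighbour_unique (E : point -> point -> Prop)
  (w Q : nat -> point) (l m : nat) :
  SAW w l -> (forall a b, E a b <-> walk_edge w l a b \/ poly_edge Q m a b) ->
  (forall v, ~ (walk_vertex w l v /\ poly_vertex Q m v)) ->
  exists w0, walk_vertex w l w0 /\ forall u v, E w0 u -> E w0 v -> u = v.
Proof.
  intros Hs Hedges Hdisj.
  assert (Hw0 : walk_vertex w l (w 0%nat)) by (exists 0%nat; split; [lia | reflexivity]).
  exists (w 0%nat); split; [exact Hw0 |].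
  assert (Hwalk : forall u, E (w 0%nat) u -> walk_edge w l (w 0%nat) u).
  { intros u Hu. destruct (proj1 (Hedges _ _) Hu) as [H | H]; [exact H | exfalso].
    apply (Hdisj (w 0%nat)); split; [exact Hw0 |].
    exact (proj1 (poly_edge_vertices Q m _ _ H)). }
  intros u v Hu Hv. apply (SAW_start_neighbour_unique w l); auto.
Qed.

Lemma right_detachable_loop (rho : nat -> point) (l j k : nat) :
  SAW rho l -> right_detachable rho l j k -> right_detached_loop rho l j k.
Proof.
  intros Hs (Hjk & Hkl & x & y & Hjk_edge & [p [Hp Hp_edge]] & [q [Hq Hq_edge]] & _ &
             HL_unwalked & rho' & l' & Q & m & Hsaw' & HQ & Hedges & Hdisj & Hpart & Htransl).
  set (Sg := swapped_edge rho l x y).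
  assert (Sg_PV : forall a b, Sg a b -> (poly_vertex Q m a <-> poly_vertex Q m b))
    by (intros a b Hab;
        apply (disjoint_union_edge_poly_vertex rho' Q l' m), Hedges; assumption).
  assert (Hstep : forall i, (i < l)%nat -> i <> p -> i <> q -> Sg (rho i) (rho (S i))).
  { intros i Hi Hip Hiq. left; split.
    - exists i; split; [exact Hi | left; split; reflexivity].
    - intros [Hh | Hh]; apply same_edge_sym in Hh.
      + apply Hip, (SAW_edge_index_unique rho l i p (x - 1, y) (x, y)); assumption.
      + apply Hiq, (SAW_edge_index_unique rho l i q (x - 1, y + 1) (x, y + 1)); assumption. }
  pose proof (translates_miss_rightmost _ _ Htransl) as Hright.
  pose proof (disjoint_union_start_neighbour_unique Sg rho' Q l' m Hsaw' Hedges Hdisj) as Hend.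
  assert (HPV : exists v, poly_vertex Q m v)
    by (exists (Q 0%nat), 0%nat; split; [destruct HQ; lia | reflexivity]).
  assert (Hcol_L : Sg (x - 1, y) (x - 1, y + 1)) by (right; right; left; split; reflexivity).
  assert (Hcol_R : Sg (x, y) (x, y + 1)) by (right; left; left; split; reflexivity).
  assert (HLab : (x - 1, y) <> (x - 1, y + 1)) by (intros E; injection E; lia).
  assert (Hpq : p <> q).
  { intros <-. destruct Hp_edge as [[E1 E2] | [E1 E2]], Hq_edge as [[E3 E4] | [E3 E4]];
      first [ rewrite E1 in E3; injection E3; lia
            | rewrite E2 in E4; injection E4; lia ]. }
  assert (HL_unwalked' : forall i, (i < l)%nat ->
            ~ same_edge (rho i) (rho (S i)) (x - 1, y) (x - 1, y + 1))
    by (intros i Hi Hh; apply HL_unwalked; exists i; split; assumption).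
  destruct (Nat.lt_total p q) as [Hlt | [Heq | Hlt]]; [| contradiction |].
  - apply (right_detached_loop_of_block rho l _ _ Sg Hs Hpart Hdisj HPV Hend Sg_PV
             (swapped_edge_sym rho l x y) Hright p q Hlt Hq Hstep
             (x - 1, y) (x, y) (x - 1, y + 1) (x, y + 1) eq_refl eq_refl Hcol_L Hcol_R
             HLab HL_unwalked' Hp_edge Hq_edge); simpl; (assumption || lia).
  - apply (right_detached_loop_of_block rho l _ _ Sg Hs Hpart Hdisj HPV Hend Sg_PV
             (swapped_edge_sym rho l x y) Hright q p Hlt Hp
             (fun i Hi Hiq Hip => Hstep i Hi Hip Hiq)
             (x - 1, y + 1) (x, y + 1) (x - 1, y) (x, y) eq_refl eq_refl
             (swapped_edge_sym _ _ _ _ _ _ Hcol_L) (swapped_edge_sym _ _ _ _ _ _ Hcol_R)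
             (not_eq_sym HLab) (fun i Hi Hh => HL_unwalked' i Hi (same_edge_flip _ _ _ _ Hh))
             Hq_edge Hp_edge); simpl; try lia.
    apply same_edge_flip, Hjk_edge.
Qed.

Lemma discrete_ivt (f : nat -> Z) (u v : nat) (z : Z) :
  (u <= v)%nat -> (forall i, (u <= i < v)%nat -> Z.abs (f (S i) - f i) <= 1) ->
  between (f u) (f v) z -> exists i, (u <= i <= v)%nat /\ f i = z.
Proof.
  unfold between; intros Huv Hstep Hz. induction v as [|v IH].
  - exists 0%nat; split; [lia |].
    replace u with 0%nat in Hz by lia; lia.
  - destruct (Z.eq_dec (f (S v)) z) as [E | E].
    + exists (S v); split; [lia | exact E].
    + assert (Hv : (u <= v)%nat) by (destruct (Nat.eq_dec u (S v)); [subst; lia | lia]).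
      assert (Hs := Hstep v ltac:(lia)).
      destruct (IH Hv (fun i Hi => Hstep i ltac:(lia)) ltac:(lia)) as [i [Hi Hfi]].
      exists i; split; [lia | exact Hfi].
Qed.

Lemma unit_gap_between_disjoint (r1 r2 s1 s2 : Z) :
  (forall z, between r1 r2 z -> between s1 s2 z -> False) ->
  Z.abs (r1 - s1) = 1 -> Z.abs (r2 - s2) = 1 -> r1 = r2 /\ s1 = s2.
Proof.
  intros Hdisj H1 H2.
  pose proof (Hdisj r1); pose proof (Hdisj r2); pose proof (Hdisj s1); pose proof (Hdisj s2).
  unfold between in *; lia.
Qed.

Lemma right_detached_loops_no_overlap (rho : nat -> point) (l j1 k1 j2 k2 : nat) :
  SAW rho l -> right_detached_loop rho l j1 k1 -> right_detached_loop rho l j2 k2 ->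
  (j1 < j2 <= k1)%nat -> (k1 < k2)%nat -> False.
Proof.
  intros Hs [[Hj1 Hk1] _ Hexit1 Hx1 Hy1 Hright1] [[Hj2 Hk2] Henter2 _ Hx2 Hy2 Hright2]
    Hj Hk.
  assert (Hrows : forall a b, (j1 <= a < j2)%nat -> (k1 < b <= k2)%nat ->
                    yc (rho a) <> yc (rho b)).
  { intros a b Ha Hb Hab.
    pose proof (Hright1 a b ltac:(lia) ltac:(lia) ltac:(lia) (eq_sym Hab)).
    pose proof (Hright2 b a ltac:(lia) ltac:(lia) ltac:(lia) Hab).
    lia. }
  assert (Hstep : forall i, (i < l)%nat -> Z.abs (yc (rho (S i)) - yc (rho i)) <= 1)
    by (intros i Hi; apply adj_yc_step, (proj1 Hs), Hi).
  assert (Hgap : forall z, between (yc (rho j1)) (yc (rho (j2 - 1)%nat)) z ->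
                   between (yc (rho (S k1))) (yc (rho k2)) z -> False).
  { intros z Hza Hzb.
    destruct (discrete_ivt (fun i => yc (rho i)) j1 (j2 - 1) z ltac:(lia)
                (fun i Hi => Hstep i ltac:(lia)) Hza) as [a [Ha Hya]].
    destruct (discrete_ivt (fun i => yc (rho i)) (S k1) k2 z ltac:(lia)
                (fun i Hi => Hstep i ltac:(lia)) Hzb) as [b [Hb Hyb]].
    apply (Hrows a b); [lia | lia | congruence]. }
  rewrite Henter2, Hexit1 in Hgap; simpl in Hgap.
  destruct (unit_gap_between_disjoint _ _ _ _ Hgap Hy1 Hy2) as [Hyj Hyk].
  pose proof (Hright2 j2 j1 ltac:(lia) ltac:(lia) ltac:(lia) Hyj).
  pose proof (Hright1 k1 k2 ltac:(lia) ltac:(lia) ltac:(lia) (eq_sym Hyk)).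
  lia.
Qed.

Lemma right_detached_loops_gap (rho : nat -> point) (l j1 k1 j2 k2 : nat) :
  SAW rho l -> right_detached_loop rho l j1 k1 -> right_detached_loop rho l j2 k2 ->
  (k1 - j1 = k2 - j2)%nat -> (k1 < k2)%nat -> (k1 - j1 <= k2 - k1)%nat.
Proof.
  intros Hs L1 L2 Hh Hk.
  destruct (le_lt_dec (k1 - j1) (k2 - k1)) as [Hle | Hlt]; [exact Hle | exfalso].
  pose proof (loop_bounds _ _ _ _ L1); pose proof (loop_bounds _ _ _ _ L2).
  apply (right_detached_loops_no_overlap rho l j1 k1 j2 k2); auto; lia.
Qed.

Theorem mainTheorem11 (l : nat) (rho : nat -> point) :
  SAW rho l ->
  (forall i, (i <= l)%nat -> yc (rho 0%nat) <= yc (rho i)) ->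
  (forall i, (i <= l)%nat -> yc (rho i) <= yc (rho l)) ->
  forall (h j1 k1 j2 k2 : nat),
    right_detachable rho l j1 k1 -> (k1 - j1)%nat = h ->
    right_detachable rho l j2 k2 -> (k2 - j2)%nat = h ->
    (j1, k1) <> (j2, k2) ->
    Z.of_nat h <= Z.abs (Z.of_nat k2 - Z.of_nat k1).
Proof.
  intros Hs _ _ h j1 k1 j2 k2 R1 H1 R2 H2 Hne.
  apply (right_detachable_loop rho l) in R1, R2; try assumption.
  pose proof (loop_bounds _ _ _ _ R1); pose proof (loop_bounds _ _ _ _ R2).
  destruct (Nat.lt_total k1 k2) as [Hlt | [Heq | Hlt]].
  - pose proof (right_detached_loops_gap rho l j1 k1 j2 k2 Hs R1 R2 ltac:(lia) Hlt). lia.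
  - exfalso; apply Hne; f_equal; lia.
  - pose proof (right_detached_loops_gap rho l j2 k2 j1 k1 Hs R2 R1 ltac:(lia) Hlt). lia.
Qed.
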